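(* In the setting of the context, let $\mathbf{C}\in T$ be the unique element satisfying $\mathbf{A}+\frac{q\mathbf{B}\mathbf{C}-q^{-1}\mathbf{C}\mathbf{B}}{q^2-q^{-2}}=\frac{(\mathbf{a}+\mathbf{a}^{-1})(\Lambda+\Lambda^{-1})+(\mathbf{b}+\mathbf{b}^{-1})(\mathbf{c}+\mathbf{c}^{-1})}{q+q^{-1}}$, $\mathbf{B}+\frac{q\mathbf{C}\mathbf{A}-q^{-1}\mathbf{A}\mathbf{C}}{q^2-q^{-2}}=\frac{(\mathbf{b}+\mathbf{b}^{-1})(\Lambda+\Lambda^{-1})+(\mathbf{c}+\mathbf{c}^{-1})(\mathbf{a}+\mathbf{a}^{-1})}{q+q^{-1}}$ and $\mathbf{C}+\frac{q\mathbf{A}\mathbf{B}-q^{-1}\mathbf{B}\mathbf{A}}{q^2-q^{-2}}=\frac{(\mathbf{c}+\mathbf{c}^{-1})(\Lambda+\Lambda^{-1})+(\mathbf{a}+\mathbf{a}^{-1})(\mathbf{b}+\mathbf{b}^{-1})}{q+q^{-1}}$. Then $$\mathbf{A}+\frac{q\mathbf{B}\mathbf{C}-q^{-1}\mathbf{C}\mathbf{B}}{q^2-q^{-2}}=0,\quad \mathbf{B}+\frac{q\mathbf{C}\mathbf{A}-q^{-1}\mathbf{A}\mathbf{C}}{q^2-q^{-2}}=0,\quad \mathbf{C}+\frac{q\mathbf{A}\mathbf{B}-q^{-1}\mathbf{B}\mathbf{A}}{q^2-q^{-2}}=0.$$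
   Context: Let $\Gamma$ be a finite connected undirected distance-regular graph (no loops or multiple edges) with vertex set $X$, distance $\partial$ and diameter $D\ge3$, which is bipartite and 2-homogeneous in the sense of Nomura (for all $1\le i\le D$, all $y,z$ with $\partial(y,z)=2$ and all $t$ with $\partial(y,t)=\partial(z,t)=i$, $|\Gamma_1(y)\cap\Gamma_1(z)\cap\Gamma_{i-1}(t)|$ depends only on $i$), and not a hypercube; $V=\mathbb{C}^X$. Let $A$ be the adjacency matrix, $E_0=|X|^{-1}J$ and $E_1,\dots,E_D$ a $Q$-polynomial ordering of the nontrivial primitive idempotents of the Bose–Mesner algebra, $A=\sum_i\theta_iE_i$. Fix a vertex $x$; $E_i^*$ is the diagonal $0/1$ matrix projecting onto vertices at distance $i$ from $x$; $A^*$ is diagonal with $(y,y)$-entry $|X|(E_1)_{xy}$, $A^*=\sum\theta_i^*E_i^*$; $T$ is the algebra generated by $A,A^*$. It is known that there is a nonzero $q\in\mathbb{C}$ with $q^4\ne1$ such that $\theta_i=\theta_i^*=\frac{q^{D-2}+q^{2-D}}{q^2-q^{-2}}(q^{D-2i}-q^{2i-D})$; fix such $q$. Set $w=w^*=0$, $v=v^*=-u=-u^*=\frac{q^{D-2}+q^{2-D}}{q^2-q^{-2}}$; fix $a,b$ with $a^2=u/v$, $b^2=u^*/v^*$; $\mathbf{A}=(A-wI)/(av)$, $\mathbf{B}=(A^*-w^*I)/(bv^* )$. For an irreducible $T$-module $W\subseteq V$: endpoint $\rho=\min\{i:E^*_iW\ne0\}$, dual endpoint $\tau=\min\{i:E_iW\ne0\}$,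 diameter $d=|\{i:E_i^*W\ne0\}|-1$. It is known that every irreducible $T$-module is thin ($\dim E_i^*W\le1$), with $\tau=\rho$ and $d=D-2\rho$. Put $a(W)=aq^{2\tau+d-D}$, $b(W)=bq^{2\rho+d-D}$. Then $(\mathbf{A}|_W,\{E_{\tau+i}|_W\}_{i=0}^d,\mathbf{B}|_W,\{E^*_{\rho+i}|_W\}_{i=0}^d)$ is a Leonard system with eigenvalues $\vartheta_i=a(W)q^{2i-d}+a(W)^{-1}q^{d-2i}$ and dual eigenvalues $\vartheta^*_i=b(W)q^{2i-d}+b(W)^{-1}q^{d-2i}$. Let $\kappa=0$ if $d=0$ and, for $d\ge1$, $\kappa=a(W)b(W)^{-1}q^{d-1}+a(W)^{-1}b(W)q^{1-d}+\phi_1/((q-q^{-1})(q^d-q^{-d}))$ with $\phi_1=(\vartheta^*_0-\vartheta^*_1)(\mathrm{trace}(E^*_\rho\mathbf{A}|_W)-\vartheta_d)$; $c(W)$ is a root of $\xi^2-\kappa\xi+1=0$. Isomorphism of irreducible modules: linear bijection commuting with $T$; $\Psi$ = set of types; for $\psi\in\Psi$, $a(\psi),b(\psi),d(\psi),c(\psi)$ are $a(W),b(W)$, the diameter, and (a fixed choice of) $c(W)$ for $W$ of type $\psi$. $V_\psi$ = span of irreducible modules of type $\psi$, $V=\bigoplus_\psi V_\psi$, $e_\psi$ = identity on $V_\psi$ and $0$ on other $V_\lambda$. Define $\mathbf{a}=\sum_\psi a(\psi)e_\psi$, $\mathbf{b}=\sum_\psi b(\psi)e_\psi$, $\mathbf{c}=\sum_\psi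 c(\psi)e_\psi$, $\Lambda=\sum_\psi q^{d(\psi)+1}e_\psi$ (invertible, with inverses $\sum_\psi a(\psi)^{-1}e_\psi$, etc.). *)

From HB Require Import structures.
From mathcomp Require Import all_boot all_order all_algebra all_field.
Set Implicit Arguments. Unset Strict Implicit. Unset Printing Implicit Defensive.
Import Order.TTheory GRing.Theory Num.Theory.
Local Open Scope ring_scope.

(* Vertex set X = 'I_n.+1 (so |X| = n.+1);  V = C^X.  A vector v of V is
   represented as a row vector 'rV_n.+1 and a subspace W of V as the row space
   of a square matrix W.  A matrix M acts on (column) vectors by v |-> M v,
   which on row vectors reads v |-> v *m M^T. *)

Section Setting.
Variable n : nat.
Local Notation X := 'I_n.+1.
Variable e : rel X.
Variable E : nat -> 'M[algC]_n.+1.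
Variable x : X.
Variables q a b : algC.

Fixpoint walk (k : nat) (y z : X) : bool :=
  if k is k'.+1 then [exists w, e y w && walk k' w z] else y == z.

Definition connected_graph : Prop := forall y z : X, exists k, walk k y z.
Definition simple_graph : Prop := irreflexive e /\ symmetric e.

(* path-length distance (the bound n.+1 is never reached in a connected graph) *)
Definition dist (y z : X) : nat := (\big[minn/n.+1]_(k < n.+1 | walk k y z) k)%N.
Definition diam : nat := (\max_(y : X) \max_(z : X) dist y z)%N.

Definition distance_regular : Prop :=
  forall (i j : nat) (y z y' z' : X), dist y z = dist y' z' ->
    #|[set w | (dist y w == i) && (dist z w == j)]| =
    #|[set w | (dist y' w == i) && (dist z' w == j)]|.

Definition bipartite : Prop :=
  exists f : X -> bool, forall y z, e y z -> f y != f z.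

Definition two_homogeneous : Prop :=
  forall i : nat, (1 <= i <= diam)%N ->
  forall y z t y' z' t' : X,
    dist y z = 2%N -> dist y t = i -> dist z t = i ->
    dist y' z' = 2%N -> dist y' t' = i -> dist z' t' = i ->
    #|[set w | e y w && e z w && (dist t w == i.-1)]| =
    #|[set w | e y' w && e z' w && (dist t' w == i.-1)]|.

Definition is_hypercube : Prop :=
  exists f : X -> {ffun 'I_diam -> bool}, bijective f /\
    forall y z, e y z = (#|[set k | f y k != f z k]| == 1%N).

Definition Amx : 'M[algC]_n.+1 := \matrix_(y, z) (e y z)%:R.
Definition Adist (i : nat) : 'M[algC]_n.+1 := \matrix_(y, z) (dist y z == i)%:R.
Definition BM (M : 'M[algC]_n.+1) : Prop :=
  exists c : nat -> algC, M = \sum_(i < diam.+1) c i *: Adist i.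

Definition hadpoly (p : {poly algC}) (M : 'M[algC]_n.+1) : 'M[algC]_n.+1 :=
  \sum_(k < size p) p`_k *: \matrix_(y, z) (M y z ^+ k).

(* E_0 = |X|^-1 J, E_0..E_D are the primitive idempotents of the Bose-Mesner
   algebra (D+1 nonzero pairwise orthogonal idempotents of BM summing to I,
   BM having dimension D+1), and E_0, E_1, ..., E_D is a Q-polynomial ordering:
   E_i is a polynomial of degree i in E_1 w.r.t. the Hadamard product. *)
Definition Qpoly_primitive_idempotents : Prop :=
  [/\ E 0%N = (n.+1)%:R^-1 *: const_mx 1,
      forall i, (i <= diam)%N -> BM (E i) /\ E i != 0,
      forall i j, (i <= diam)%N -> (j <= diam)%N ->
                  E i *m E j = (if i == j then E i else 0),
      \sum_(i < diam.+1) E i = 1%:M &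
      forall i, (i <= diam)%N ->
        exists p : {poly algC}, size p = i.+1 /\ E i = hadpoly p (E 1%N)].

Definition Estar (i : nat) : 'M[algC]_n.+1 := diag_mx (\row_y (dist x y == i)%:R).
Definition Astar : 'M[algC]_n.+1 := diag_mx (\row_y ((n.+1)%:R * E 1%N x y)).

Definition word (s : seq bool) : 'M[algC]_n.+1 :=
  \prod_(c <- s) (if c then Amx else Astar).
(* T = the subalgebra of Mat_X(C) generated by A and A^* *)
Definition Tmem (M : 'M[algC]_n.+1) : Prop :=
  exists l : seq (algC * seq bool), M = \sum_(p <- l) p.1 *: word p.2.

Definition is_Tmodule (W : 'M[algC]_n.+1) : Prop :=
  forall M, Tmem M -> (W *m M^T <= W)%MS.
Definition irreducible (W : 'M[algC]_n.+1) : Prop :=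
  [/\ is_Tmodule W, W != 0 &
      forall W', is_Tmodule W' -> (W' <= W)%MS -> W' = 0 \/ (W' == W)%MS].

(* E W <> 0, in row form *)
Definition nz_on (F W : 'M[algC]_n.+1) : bool := W *m F^T != 0.

Definition endpoint (W : 'M[algC]_n.+1) : nat :=
  (\big[minn/diam.+1]_(i < diam.+1 | nz_on (Estar i) W) i)%N.
Definition dual_endpoint (W : 'M[algC]_n.+1) : nat :=
  (\big[minn/diam.+1]_(i < diam.+1 | nz_on (E i) W) i)%N.
Definition mod_diam (W : 'M[algC]_n.+1) : nat :=
  (#|[set i : 'I_diam.+1 | nz_on (Estar i) W]|).-1.

(* isomorphism of T-modules: a linear bijection W -> W' commuting with T
   (the map is v |-> v *m P on row vectors) *)
Definition Tiso (W W' : 'M[algC]_n.+1) : Prop :=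
  exists P : 'M[algC]_n.+1,
    [/\ (W *m P == W')%MS, \rank (W *m P) = \rank W &
        forall M, Tmem M -> W *m (M^T *m P - P *m M^T) = 0].

(* trace of the restriction to the invariant subspace W of v |-> M v *)
Definition restr_trace (W M : 'M[algC]_n.+1) : algC :=
  \tr (row_base W *m M^T *m pinvmx (row_base W)).

Definition thetaform (i : nat) : algC :=
  (q ^ (diam%:Z - 2) + q ^ (2 - diam%:Z)) / (q ^+ 2 - q ^- 2) *
  (q ^ (diam%:Z - (2 * i)%:Z) - q ^ ((2 * i)%:Z - diam%:Z)).

Definition wpar : algC := 0.
Definition vpar : algC := (q ^ (diam%:Z - 2) + q ^ (2 - diam%:Z)) / (q ^+ 2 - q ^- 2).
Definition upar : algC := - vpar.

Definition bA : 'M[algC]_n.+1 := (a * vpar)^-1 *: (Amx - wpar%:M).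
Definition bB : 'M[algC]_n.+1 := (b * vpar)^-1 *: (Astar - wpar%:M).

Definition aW (W : 'M[algC]_n.+1) : algC :=
  a * q ^ ((2 * dual_endpoint W + mod_diam W)%:Z - diam%:Z).
Definition bW (W : 'M[algC]_n.+1) : algC :=
  b * q ^ ((2 * endpoint W + mod_diam W)%:Z - diam%:Z).
Definition vth (W : 'M[algC]_n.+1) (i : nat) : algC :=
  aW W * q ^ ((2 * i)%:Z - (mod_diam W)%:Z) + (aW W)^-1 * q ^ ((mod_diam W)%:Z - (2 * i)%:Z).
Definition vths (W : 'M[algC]_n.+1) (i : nat) : algC :=
  bW W * q ^ ((2 * i)%:Z - (mod_diam W)%:Z) + (bW W)^-1 * q ^ ((mod_diam W)%:Z - (2 * i)%:Z).

Definition phi1 (W : 'M[algC]_n.+1) : algC :=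
  (vths W 0 - vths W 1) *
  (restr_trace W (Estar (endpoint W) *m bA) - vth W (mod_diam W)).

Definition kappa (W : 'M[algC]_n.+1) : algC :=
  if mod_diam W == 0%N then 0 else
  aW W / bW W * q ^ ((mod_diam W)%:Z - 1) + bW W / aW W * q ^ (1 - (mod_diam W)%:Z)
  + phi1 W / ((q - q^-1) * (q ^+ mod_diam W - q ^- mod_diam W)).

(* facts stated as known in the context: every irreducible T-module is thin,
   with tau = rho and d = D - 2 rho *)
Definition thin_known_facts : Prop :=
  forall W, irreducible W ->
    [/\ forall i, (\rank (W *m (Estar i)^T) <= 1)%N,
        dual_endpoint W = endpoint W &
        mod_diam W = (diam - 2 * endpoint W)%N].

(* c : a fixed choice, on each isomorphism type, of a root of xi^2 - kappa xi + 1 *)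
Definition c_choice (c : 'M[algC]_n.+1 -> algC) : Prop :=
  (forall W, irreducible W -> c W ^+ 2 - kappa W * c W + 1 = 0) /\
  (forall W W', irreducible W -> irreducible W' -> Tiso W W' -> c W = c W').

(* Mx = sum_psi f(psi) e_psi : Mx acts on every irreducible T-module W
   (hence on V_psi for the type psi of W) as the scalar f(W) *)
Definition scalar_on_types (Mx : 'M[algC]_n.+1) (f : 'M[algC]_n.+1 -> algC) : Prop :=
  forall W, irreducible W -> W *m Mx^T = f W *: W.

End Setting.

(* Since u = -v, a^2 = b^2 = -1.  Let W be an irreducible T-module with endpoint rho and
   diameter d = D - 2 rho.  This subtraction does not truncate: otherwise W lies in E*_rho V,
   which A kills because the graph is bipartite, forcing theta_rho = 0 = theta_(D - rho).
   Hence 2 tau + d - D = 2 rho + d - D = 0, that is a(W) = a and b(W) = b.  Bipartiteness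
   also gives E*_rho A E*_rho = 0, so the trace in phi_1 vanishes, kappa(W) = 0 and
   c(W)^2 = -1.  As T is closed under conjugate transposition, V is a direct sum of
   irreducible T-modules, so the matrices a, b, c square to -1: a + a^-1 = b + b^-1 =
   c + c^-1 = 0 and the three right-hand sides vanish. *)

From HB Require Import structures.
From mathcomp Require Import all_boot all_order all_algebra all_field.
From mathcomp Require Import zify ring.
From Stdlib Require Import Classical.
Set Implicit Arguments. Unset Strict Implicit. Unset Printing Implicit Defensive.
Import Order.TTheory GRing.Theory Num.Theory Num.Def.
Local Open Scope ring_scope.

Lemma bigmin_seq_le (I : eqType) (r : seq I) (P : pred I) (F : I -> nat) m i :
  i \in r -> P i -> (\big[minn/m]_(j <- r | P j) F j <= F i)%N.
Proof.
elim: r => [|j r IH] //; rewrite inE big_cons => /orP[/eqP <- | ir] Pi.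
  by rewrite Pi geq_minl.
case: ifP => _; last exact: IH.
by rewrite (leq_trans (geq_minr _ _)) // IH.
Qed.

Lemma bigmin_ord_le (N m : nat) (P : pred 'I_N) (i : 'I_N) :
  P i -> (\big[minn/m]_(j < N | P j) j <= i)%N.
Proof. by apply: bigmin_seq_le; rewrite mem_index_enum. Qed.

Lemma bigmin_ord_witness (N : nat) (P : pred 'I_N) :
  (\big[minn/N]_(j < N | P j) j < N)%N ->
  exists2 i : 'I_N, P i & \big[minn/N]_(j < N | P j) j = i.
Proof.
apply: (big_rec (fun v => v < N -> exists2 i : 'I_N, P i & v = i)%N).
  by rewrite ltnn.
move=> i v Pi IH; rewrite /minn; case: ifP => // _ _.
by exists i.
Qed.

Section TAlgebra.
Variables (n : nat) (e : rel 'I_n.+1) (E : nat -> 'M[algC]_n.+1) (x : 'I_n.+1).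
Local Notation T := (Tmem e E x).

Lemma Tmem_ind (P : 'M[algC]_n.+1 -> Prop) :
  P 0 -> (forall M N, P M -> P N -> P (M + N)) ->
  (forall c M, P M -> P (c *: M)) -> (forall s, P (word e E x s)) ->
  forall M, T M -> P M.
Proof.
move=> P0 PD PZ Pw M [l ->]; elim: l => [|p l IH]; first by rewrite big_nil.
by rewrite big_cons; apply: PD => //; apply: PZ.
Qed.

Lemma Tmem0 : T 0.
Proof. by exists [::]; rewrite big_nil. Qed.

Lemma TmemD M N : T M -> T N -> T (M + N).
Proof. by move=> [l1 ->] [l2 ->]; exists (l1 ++ l2); rewrite big_cat. Qed.

Lemma TmemZ c M : T M -> T (c *: M).
Proof.
move=> [l ->]; exists [seq (c * p.1, p.2) | p <- l].
by rewrite big_map scaler_sumr; apply: eq_bigr => p _; rewrite scalerA.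
Qed.

Lemma TmemB M N : T M -> T N -> T (M - N).
Proof. by move=> hM hN; rewrite -scaleN1r; apply/TmemD/TmemZ. Qed.

Lemma Tmem_word s : T (word e E x s).
Proof. by exists [:: (1, s)]; rewrite big_seq1 scale1r. Qed.

Lemma word_cat s t : word e E x (s ++ t) = word e E x s *m word e E x t.
Proof. by rewrite /word big_cat mulmxE. Qed.

Lemma word_cons c s :
  word e E x (c :: s) = (if c then Amx e else Astar E x) *m word e E x s.
Proof. by rewrite -cat1s word_cat /word big_seq1. Qed.

Lemma TmemM M N : T M -> T N -> T (M *m N).
Proof.
move=> hM; elim/Tmem_ind => [|N1 N2 IH1 IH2|c N1 IH|t]; last 1 first.
- move: M hM; apply: Tmem_ind => [|M1 M2 IH1 IH2|c M1 IH|s].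
  + by rewrite mul0mx; apply: Tmem0.
  + by rewrite mulmxDl; apply: TmemD.
  + by rewrite -scalemxAl; apply: TmemZ.
  + by rewrite -word_cat; apply: Tmem_word.
- by rewrite mulmx0; apply: Tmem0.
- by rewrite mulmxDr; apply: TmemD.
- by rewrite -scalemxAr; apply: TmemZ.
Qed.

Lemma Tmem1 : T 1%:M.
Proof. by have := Tmem_word [::]; rewrite /word big_nil. Qed.

Lemma Tmem_scalar c : T c%:M.
Proof. by rewrite -scalemx1; apply/TmemZ/Tmem1. Qed.

Lemma Tmem_Amx : T (Amx e).
Proof. by have := Tmem_word [:: true]; rewrite word_cons /word big_nil mulmx1. Qed.

Lemma Tmem_Astar : T (Astar E x).
Proof. by have := Tmem_word [:: false]; rewrite word_cons /word big_nil mulmx1. Qed.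

Lemma Tmem_prod (I : Type) (r : seq I) (P : pred I) (F : I -> 'M_n.+1) :
  (forall i, P i -> T (F i)) -> T (\prod_(i <- r | P i) F i).
Proof.
move=> TF; elim: r => [|i r IH]; first by rewrite big_nil; apply: Tmem1.
by rewrite big_cons; case: ifP => // Pi; rewrite -mulmxE; apply: TmemM => //; apply: TF.
Qed.

Lemma tr_Amx : symmetric e -> (Amx e)^T = Amx e.
Proof. by move=> e_sym; apply/matrixP=> i j; rewrite !mxE e_sym. Qed.

Lemma Tmem_tr M : symmetric e -> T M -> T M^T.
Proof.
move=> e_sym; move: M; apply: Tmem_ind => [|M N|c M|].
- by rewrite trmx0; apply: Tmem0.
- by rewrite linearD; apply: TmemD.
- by rewrite linearZ; apply: TmemZ.
elim=> [|c s IH]; first by rewrite /word big_nil trmx1; apply: Tmem1.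
rewrite word_cons trmx_mul; apply: TmemM => //; case: c.
- by rewrite tr_Amx //; apply: Tmem_Amx.
- by rewrite tr_diag_mx; apply: Tmem_Astar.
Qed.

Lemma Tmem_conj M : T (map_mx conjC (Astar E x)) -> T M -> T (map_mx conjC M).
Proof.
move=> TAs; move: M; apply: Tmem_ind => [|M N|c M|].
- by rewrite map_mx0; apply: Tmem0.
- by rewrite map_mxD; apply: TmemD.
- by rewrite map_mxZ; apply: TmemZ.
elim=> [|c s IH]; first by rewrite /word big_nil map_mx1; apply: Tmem1.
rewrite word_cons map_mxM; apply: TmemM => //; case: c => //.
have -> : map_mx conjC (Amx e) = Amx e.
  by apply/matrixP=> i j; rewrite !mxE rmorph_nat.
exact: Tmem_Amx.
Qed.

End TAlgebra.

Lemma sum_ord_mulrn_eq (V : nmodType) (N d : nat) (f : nat -> V) :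
  (d < N)%N -> \sum_(i < N) f i *+ (d == i) = f d.
Proof.
move=> dN; rewrite (eq_bigr (fun i : 'I_N => if i == d :> nat then f i else 0)).
  by rewrite -big_mkcond big_ord1_eq dN.
by move=> i _; rewrite mulrb eq_sym.
Qed.

Section Graph.
Variables (n : nat) (e : rel 'I_n.+1) (x : 'I_n.+1).

Lemma walk_path k y z : walk e k y z ->
  exists p, [/\ size p = k, path e y p & last y p = z].
Proof.
elim: k y => [|k IH] y /=; first by move/eqP->; exists [::].
case/existsP=> w /andP[eyw /IH [p [sp pp lp]]].
by exists (w :: p); rewrite /= eyw sp pp lp.
Qed.

Lemma path_walk p y : path e y p -> walk e (size p) y (last y p).
Proof.
elim: p y => [|w p IH] y //= /andP[eyw pp].
by apply/existsP; exists w; rewrite eyw IH.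
Qed.

Lemma walk_short k y z : walk e k y z -> exists2 j, (j < n.+1)%N & walk e j y z.
Proof.
case/walk_path=> p [_ pp <-]; case: (shortenP pp) => p' pp' up' _.
exists (size p'); last exact: path_walk.
by have := max_card (mem (y :: p')); rewrite (card_uniqP up') card_ord.
Qed.

Lemma dist_le_walk k y z : walk e k y z -> (k < n.+1)%N -> (dist e y z <= k)%N.
Proof.
by move=> w k_lt; apply: (@bigmin_ord_le _ _ (fun j : 'I_n.+1 => walk e j y z) (Ordinal k_lt)).
Qed.

Lemma dist_xx y : dist e y y = 0%N.
Proof. by apply/eqP; rewrite -leqn0; apply: (@dist_le_walk 0) => /=. Qed.

Lemma dist_ltn y z : connected_graph e -> (dist e y z < n.+1)%N.
Proof.
move=> /(_ y z) [k /walk_short [j j_lt wj]].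
exact: leq_ltn_trans (dist_le_walk wj j_lt) j_lt.
Qed.

Lemma dist_walk y z : connected_graph e -> walk e (dist e y z) y z.
Proof. by move/(dist_ltn y z); rewrite /dist => /bigmin_ord_witness [i wi ->]. Qed.

Lemma dist_le_diam y z : (dist e y z <= diam e)%N.
Proof.
apply: leq_trans (leq_bigmax_cond y isT).
exact: (leq_bigmax_cond (F := fun z0 => dist e y z0) z isT).
Qed.

Lemma walk_parity (f : 'I_n.+1 -> bool) : (forall y z, e y z -> f y != f z) ->
  forall k y z, walk e k y z -> f z = f y (+) odd k.
Proof.
move=> hf; elim=> [|k IH] y z /=; first by move/eqP->; rewrite addbF.
case/existsP=> w /andP[eyw /IH ->].
by have := hf _ _ eyw; case: (f y); case: (f w); case: (odd k).
Qed.

Lemma dist_adj_neq y z : connected_graph e -> bipartite e -> e y z ->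
  dist e x y != dist e x z.
Proof.
move=> conn [f hf] eyz; apply/eqP=> dxy_dxz.
have := hf _ _ eyz; rewrite (walk_parity hf (dist_walk x y conn)).
by rewrite (walk_parity hf (dist_walk x z conn)) dxy_dxz eqxx.
Qed.

Lemma sum_Estar : \sum_(i < (diam e).+1) Estar e x i = 1%:M.
Proof.
apply/matrixP=> y z; rewrite summxE !mxE.
under eq_bigr => i _ do rewrite !mxE mulrnAC.
by apply: (sum_ord_mulrn_eq (fun=> (y == z)%:R)); rewrite ltnS dist_le_diam.
Qed.

Lemma mul_Estar i j : Estar e x i *m Estar e x j = if i == j then Estar e x i else 0.
Proof.
rewrite /Estar mul_diag_mx; apply/matrixP=> y z; rewrite !mxE.
case: (eqVneq i j) => [<- | ij].
  by rewrite !mxE; case: (dist e x y == i); rewrite ?mul1r ?mul0r ?mul0rn.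
rewrite mxE; case: (eqVneq (dist e x y) i) => [dxy|]; last by rewrite mul0r.
by rewrite dxy (negbTE ij) mul0rn mulr0.
Qed.

Lemma tr_Estar i : (Estar e x i)^T = Estar e x i.
Proof. exact: tr_diag_mx. Qed.

Lemma Estar_Amx_Estar i : connected_graph e -> bipartite e ->
  Estar e x i *m Amx e *m Estar e x i = 0.
Proof.
move=> conn bip; rewrite /Estar mul_diag_mx mul_mx_diag.
apply/matrixP=> y z; rewrite !mxE.
case: (eqVneq (dist e x y) i) => [dxy|]; last by rewrite !mul0r.
case: (eqVneq (dist e x z) i) => [dxz|]; last by rewrite mulr0.
case eyz: (e y z); last by rewrite mulr0 mul0r.
by have := dist_adj_neq conn bip eyz; rewrite dxy dxz eqxx.
Qed.

End Graph.

Section Idempotents.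
Variables (n : nat) (e : rel 'I_n.+1) (E : nat -> 'M[algC]_n.+1).
Hypothesis hQ : Qpoly_primitive_idempotents e E.
Local Notation D := (diam e).

Lemma E_neq0 i : (i <= D)%N -> E i != 0.
Proof. by case: hQ => _ hE _ _ _ /hE []. Qed.

Lemma mulmx_E i j : (i <= D)%N -> (j <= D)%N ->
  E i *m E j = if i == j then E i else 0.
Proof. by case: hQ => _ _ hE _ _; apply: hE. Qed.

Lemma E_lin_indep (v : 'rV_D.+1) : \sum_(i < D.+1) v 0 i *: E i = 0 -> v = 0.
Proof.
move=> hv; apply/rowP=> k; rewrite mxE.
have kD : (k <= D)%N := ltn_ord k.
have : (\sum_(i < D.+1) v 0 i *: E i) *m E k = 0 by rewrite hv mul0mx.
rewrite mulmx_suml (bigD1 k) //= big1 => [|i ik].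
  rewrite -scalemxAl mulmx_E // eqxx addr0 => /eqP.
  by rewrite scaler_eq0 (negbTE (E_neq0 kD)) orbF => /eqP.
rewrite -scalemxAl (mulmx_E (ltn_ord i : (i <= D)%N) kD).
by rewrite (_ : (i == k :> nat) = false) ?scaler0 //; apply/negbTE.
Qed.

Lemma sum_Adist (f : nat -> algC) y z :
  \sum_(l < D.+1) f l * Adist e l y z = f (dist e y z).
Proof.
under eq_bigr => l _ do rewrite mxE mulr_natr.
by apply: sum_ord_mulrn_eq; rewrite ltnS dist_le_diam.
Qed.

(* E_0, ..., E_D are independent, so their coefficient matrix on the A_l is invertible. *)
Lemma Adist_coef_unitmx (P : 'M[algC]_D.+1) :
  (forall (i : 'I_D.+1) y z, E i y z = \sum_(l < D.+1) P i l * Adist e l y z) ->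
  P \in unitmx.
Proof.
move=> EP; apply/negPn/negP; rewrite unitmxE unitfE negbK => /det0P[v v0 vP].
move/negP: v0; apply; apply/eqP/E_lin_indep/matrixP=> y z.
rewrite summxE mxE; under eq_bigr => i _ do rewrite mxE EP mulr_sumr.
rewrite exchange_big big1 // => l _.
rewrite (eq_bigr (fun i => (v 0 i * P i l) * Adist e l y z)); last first.
  by move=> i _; rewrite mulrA.
by rewrite -mulr_suml; have /matrixP/(_ 0 l) := vP; rewrite !mxE => ->; rewrite mul0r.
Qed.

Lemma E1_dist_fun : (1 <= D)%N ->
  exists c : nat -> algC, forall y z, E 1 y z = c (dist e y z).
Proof.
case: hQ => _ hBM _ _ _ /hBM [[c ->] _]; exists c => y z.
by rewrite summxE -(sum_Adist c y z); apply: eq_bigr => l _; rewrite mxE.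
Qed.

(* Were a distance j missing or c j = c k, the D+1 independent E_i would lie in the span of
   D matrices A_l (resp. A_j + A_k). *)
Section E1Profile.
Variable c : nat -> algC.
Hypothesis E1_c : forall y z, E 1 y z = c (dist e y z).

Lemma E_poly_dist : exists p : 'I_D.+1 -> {poly algC},
  forall (i : 'I_D.+1) y z, E i y z = (p i).[c (dist e y z)].
Proof.
have p_ex (i : 'I_D.+1) : exists p : {poly algC},
    [forall y, forall z, E i y z == p.[c (dist e y z)]].
  case: hQ => _ _ _ _ /(_ i (ltn_ord i)) [p [_ ->]].
  exists p; apply/forallP=> y; apply/forallP=> z.
  by rewrite /hadpoly summxE horner_coef; apply/eqP/eq_bigr => k _; rewrite !mxE E1_c.
exists (fun i => xchoose (p_ex i)) => i y z.
by have /forallP/(_ y)/forallP/(_ z)/eqP := xchooseP (p_ex i).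
Qed.

Lemma dist_attained j : (j <= D)%N -> exists y z, dist e y z = j.
Proof.
move=> jD; apply: NNPP => dist_neq.
have [p Ep] := E_poly_dist; pose j' : 'I_D.+1 := Ordinal (jD : (j < D.+1)%N).
pose P := \matrix_(i < D.+1, l < D.+1) (if l == j' then 0 else (p i).[c l]).
have /mulKmx P_inj : P \in unitmx.
  apply: Adist_coef_unitmx => i y z; rewrite Ep.
  have /negbTE djz : dist e y z != j by apply/eqP=> djz; apply: dist_neq; exists y, z.
  have := sum_Adist (fun l => if l == j then 0 else (p i).[c l]) y z.
  by rewrite djz => <-; apply: eq_bigr => l _; rewrite !mxE.
have : delta_mx j' 0 = 0 :> 'cV[algC]_D.+1.
  rewrite -[LHS]P_inj -colE (_ : col j' P = 0) ?mulmx0 //.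
  by apply/matrixP=> i k; rewrite !mxE eqxx.
by move/matrixP/(_ j' 0)/eqP; rewrite !mxE !eqxx oner_eq0.
Qed.

Lemma E1_profile_inj j k : (j <= D)%N -> (k <= D)%N -> c j = c k -> j = k.
Proof.
move=> jD kD cjk; apply: NNPP => jk.
have [p Ep] := E_poly_dist; pose j' : 'I_D.+1 := Ordinal (jD : (j < D.+1)%N).
pose k' : 'I_D.+1 := Ordinal (kD : (k < D.+1)%N).
pose P := \matrix_(i < D.+1, l < D.+1) (p i).[c l].
have /mulKmx P_inj : P \in unitmx.
  apply: Adist_coef_unitmx => i y z; rewrite Ep -(sum_Adist (fun l => (p i).[c l])).
  by apply: eq_bigr => l _; rewrite !mxE.
have : delta_mx j' 0 - delta_mx k' 0 = 0 :> 'cV[algC]_D.+1.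
  rewrite -[LHS]P_inj mulmxBr -!colE (_ : col j' P = col k' P) ?subrr ?mulmx0 //.
  by apply/matrixP=> i l; rewrite !mxE cjk.
have /negbTE j'k' : j' != k' by apply/eqP=> -[].
by move/matrixP/(_ j' 0)/eqP; rewrite !mxE !eqxx j'k' subr0 oner_eq0.
Qed.

End E1Profile.
End Idempotents.

Lemma prod_diag_mx (R : comPzRingType) (m : nat) (I : Type) (r : seq I) (P : pred I)
    (d : I -> 'rV[R]_m.+1) :
  \prod_(i <- r | P i) diag_mx (d i) = diag_mx (\row_y \prod_(i <- r | P i) d i 0 y).
Proof.
elim: r => [|i r IH].
  by rewrite big_nil; apply/matrixP=> y z; rewrite !mxE big_nil.
rewrite !big_cons; case: ifP => Pi; last first.
  by rewrite IH; apply/matrixP=> y z; rewrite !mxE big_cons Pi.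
rewrite IH -mulmxE mul_diag_mx; apply/matrixP=> y z.
by rewrite !mxE big_cons Pi mulrnAr.
Qed.

Section DualEigenvalues.
Variables (n : nat) (e : rel 'I_n.+1) (E : nat -> 'M[algC]_n.+1) (x : 'I_n.+1).
Variable thetas : nat -> algC.
Hypothesis hQ : Qpoly_primitive_idempotents e E.
Hypothesis D_ge1 : (1 <= diam e)%N.
Hypothesis dist_reg : distance_regular e.
Hypothesis Astar_thetas : Astar E x = \sum_(i < (diam e).+1) thetas i *: Estar e x i.
Local Notation D := (diam e).
Local Notation T := (Tmem e E x).

Lemma Astar_diag : Astar E x = diag_mx (\row_y thetas (dist e x y)).
Proof.
rewrite Astar_thetas; apply/matrixP=> y z; rewrite summxE !mxE.
under eq_bigr => i _ do rewrite !mxE mulrnAr mulr_natr mulrnAC.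
by apply: (sum_ord_mulrn_eq (fun i => thetas i *+ (y == z))); rewrite ltnS dist_le_diam.
Qed.

Lemma dist_from_base j : (j <= D)%N -> exists y, dist e x y = j.
Proof.
move=> jD; have [c E1_c] := E1_dist_fun hQ D_ge1.
have [y [z dyz]] := dist_attained hQ E1_c jD.
have := @dist_reg j j y y x x; rewrite !dist_xx => /(_ erefl) card_eq.
have : (0 < #|[set w | (dist e x w == j) && (dist e x w == j)]|)%N.
  by rewrite -card_eq; apply/card_gt0P; exists z; rewrite inE dyz eqxx.
by case/card_gt0P=> w; rewrite inE => /andP[/eqP dxw _]; exists w.
Qed.

Lemma thetas_E1 c : (forall y z, E 1 y z = c (dist e y z)) ->
  forall j, (j <= D)%N -> thetas j = (n.+1)%:R * c j.
Proof.
move=> E1_c j jD; have [y dxy] := dist_from_base jD.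
have /matrixP/(_ y y) := Astar_diag.
by rewrite /Astar !mxE eqxx !mulr1n E1_c dxy => <-.
Qed.

Lemma thetas_inj j k : (j <= D)%N -> (k <= D)%N -> thetas j = thetas k -> j = k.
Proof.
move=> jD kD; have [c E1_c] := E1_dist_fun hQ D_ge1.
rewrite !(thetas_E1 E1_c) // => /mulfI cjk; apply: (E1_profile_inj hQ E1_c jD kD).
by apply: cjk; rewrite pnatr_eq0.
Qed.

(* Lagrange interpolation: E*_j is a polynomial in A*, as the dual eigenvalues are distinct. *)
Lemma Tmem_Estar j : T (Estar e x j).
Proof.
case: (leqP j D) => jD; last first.
  suff -> : Estar e x j = 0 by apply: Tmem0.
  apply/matrixP=> y z; rewrite !mxE ltn_eqF ?mul0rn //.
  exact: leq_ltn_trans (dist_le_diam e x y) jD.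
pose pi := \prod_(i < D.+1 | (i : nat) != j) (thetas j - thetas i).
have pi_neq0 : pi != 0.
  rewrite prodf_seq_neq0; apply/allP=> i _; apply/implyP=> ij.
  by rewrite subr_eq0; apply: contra ij => /eqP/thetas_inj-> //; rewrite -ltnS.
suff -> : Estar e x j =
    pi^-1 *: \prod_(i < D.+1 | (i : nat) != j) (Astar E x - (thetas i)%:M).
  by apply/TmemZ/Tmem_prod => i _; apply/TmemB; [apply: Tmem_Astar | apply: Tmem_scalar].
rewrite (eq_bigr (fun i : 'I_D.+1 => diag_mx (\row_y (thetas (dist e x y) - thetas i))));
  last first.
  move=> i _; rewrite Astar_diag; apply/matrixP=> y z; rewrite !mxE.
  by case: (y == z); rewrite ?mulr1n ?mulr0n ?subr0.
rewrite prod_diag_mx; apply/matrixP=> y z; rewrite !mxE.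
case: (y == z); last by rewrite !mulr0n mulr0.
under eq_bigr => i _ do rewrite mxE.
rewrite !mulr1n; case: (eqVneq (dist e x y) j) => [-> | dxy]; first by rewrite mulVf.
have dxy_lt : (dist e x y < D.+1)%N by rewrite ltnS dist_le_diam.
by rewrite (bigD1 (Ordinal dxy_lt)) //= subrr mul0r mulr0.
Qed.

Lemma Tmem_conj_Astar : T (map_mx conjC (Astar E x)).
Proof.
rewrite Astar_thetas raddf_sum /=.
elim/big_rec: _ => [|i M _ TM]; first by apply: Tmem0.
apply: TmemD TM; rewrite map_mxZ; apply: TmemZ.
suff -> : map_mx conjC (Estar e x i) = Estar e x i by apply: Tmem_Estar.
by apply/matrixP=> y z; rewrite !mxE rmorphMn rmorph_nat.
Qed.

End DualEigenvalues.

Lemma mulmx_conjT_eq0 (m k : nat) (Z : 'M[algC]_(m, k)) :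
  Z *m (map_mx conjC Z)^T = 0 -> Z = 0.
Proof.
move=> ZZ0; apply/matrixP=> i j; rewrite mxE.
have /matrixP/(_ i i) := ZZ0; rewrite !mxE => norm0.
have nneg l : predT l -> 0 <= Z i l * (map_mx conjC Z)^T l i.
  by rewrite !mxE mul_conjC_ge0.
have := @psumr_eq0P _ _ predT _ nneg norm0 j isT.
by rewrite !mxE => /eqP; rewrite mul_conjC_eq0 => /eqP.
Qed.

Section CompleteReducibility.
Variables (n : nat) (e : rel 'I_n.+1) (E : nat -> 'M[algC]_n.+1) (x : 'I_n.+1).
Local Notation T := (Tmem e E x).
Local Notation is_Tmodule := (is_Tmodule e E x).
Local Notation irreducible := (irreducible e E x).
Hypothesis Tmem_tr : forall M, T M -> T M^T.
Hypothesis Tmem_conj : forall M, T M -> T (map_mx conjC M).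

Definition orthmx (W : 'M[algC]_n.+1) : 'M[algC]_n.+1 := kermx (map_mx conjC W)^T.

Lemma capmx_orth W : (W :&: orthmx W)%MS = 0.
Proof.
apply: mulmx_conjT_eq0; set Z := (W :&: orthmx W)%MS.
have /sub_kermxP Z_orth : (Z <= orthmx W)%MS by apply: capmxSr.
have /submxP [Y ZW] : (Z <= W)%MS by apply: capmxSl.
by rewrite {2}ZW map_mxM trmx_mul mulmxA Z_orth mul0mx.
Qed.

Lemma addsmx_orth_full W : (1%:M <= W + orthmx W)%MS.
Proof.
rewrite sub1mx /row_full; apply/eqP.
have := mxrank_sum_cap W (orthmx W); rewrite capmx_orth mxrank0 addn0 => ->.
by rewrite mxrank_ker mxrank_tr mxrank_map subnKC // rank_leq_row.
Qed.

Lemma is_Tmodule_orth W : is_Tmodule W -> is_Tmodule (orthmx W).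
Proof.
move=> W_mod M TM; apply/sub_kermxP.
have /W_mod/submxP [Y WM] : T (map_mx conjC M)^T by apply/Tmem_tr/Tmem_conj.
have conjK : map_mx conjC (map_mx conjC M) = M.
  by apply/matrixP=> i j; rewrite !mxE conjCK.
have conjWM : map_mx conjC W *m M = map_mx conjC Y *m map_mx conjC W.
  by rewrite -map_mxM -WM trmxK map_mxM conjK.
by rewrite -mulmxA -trmx_mul conjWM trmx_mul mulmxA (sub_kermxP (submx_refl _)) mul0mx.
Qed.

Lemma is_Tmodule_cap W1 W2 :
  is_Tmodule W1 -> is_Tmodule W2 -> is_Tmodule (W1 :&: W2)%MS.
Proof.
move=> W1_mod W2_mod M TM; rewrite sub_capmx; apply/andP; split.
  by apply: submx_trans (W1_mod M TM); apply/submxMr/capmxSl.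
by apply: submx_trans (W2_mod M TM); apply/submxMr/capmxSr.
Qed.

Lemma irreducible_submodule U : is_Tmodule U -> U != 0 ->
  exists2 W, irreducible W & (W <= U)%MS.
Proof.
have [k rU] := ubnP (\rank U); elim: k U rU => [|k IH] U rU U_mod U0 //.
case: (classic (irreducible U)) => [U_irr | U_red]; first by exists U.
have [W' [W'_mod W'U W'0 W'U']] : exists W', [/\ is_Tmodule W', (W' <= U)%MS,
    W' != 0 & ~~ (W' == U)%MS].
  apply: NNPP => no_sub; apply: U_red; split => // W' W'_mod W'U.
  case: (eqVneq W' 0) => [|W'0]; [by left | right; apply: negbNE].
  by apply/negP=> W'U'; apply: no_sub; exists W'.
have rW' : (\rank W' < k)%N.
  by rewrite -ltnS (leq_trans _ rU) // ltnS (ltn_leqif (mxrank_leqif_eq W'U)).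
have [W W_irr WW'] := IH W' rW' W'_mod W'0.
by exists W => //; apply: submx_trans WW' W'U.
Qed.

Lemma Tmodule_annihilated (N : 'M[algC]_n.+1) :
  (forall W, irreducible W -> W *m N^T = 0) ->
  forall U, is_Tmodule U -> U *m N^T = 0.
Proof.
move=> irrN U; have [k rU] := ubnP (\rank U); elim: k U rU => [|k IH] U rU U_mod //.
case: (eqVneq U 0) => [-> | U0]; first by rewrite mul0mx.
have [W W_irr WU] := irreducible_submodule U_mod U0.
have WN := irrN _ W_irr; case: W_irr => W_mod W0 _.
pose U' := (orthmx W :&: U)%MS.
have U'_mod : is_Tmodule U' by apply/is_Tmodule_cap/U_mod/is_Tmodule_orth.
have U_split : (U <= W + U')%MS.
  rewrite /U' (matrix_modl (orthmx W) WU) sub_capmx submx_refl andbT.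
  exact: submx_trans (submx1 _) (addsmx_orth_full W).
have rU' : (\rank U' < k)%N.
  rewrite -ltnS (leq_trans _ rU) // ltnS.
  rewrite (ltn_leqif (mxrank_leqif_sup (capmxSr _ _))); apply/negP => UU'.
  have : (W <= W :&: orthmx W)%MS.
    by rewrite sub_capmx submx_refl (submx_trans (submx_trans WU UU')) ?capmxSl.
  by rewrite capmx_orth submx0 (negbTE W0).
case/sub_addsmxP: U_split => [[u1 u2] /= ->].
by rewrite mulmxDl -!mulmxA (IH _ rU' U'_mod) WN !mulmx0 addr0.
Qed.

Lemma irreducibles_annihilated_eq0 (N : 'M[algC]_n.+1) :
  (forall W, irreducible W -> W *m N^T = 0) -> N = 0.
Proof.
move=> irrN; have := Tmodule_annihilated irrN (fun M _ => submx1 (1%:M *m M^T)).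
by rewrite mul1mx => /eqP; rewrite trmx_eq0 => /eqP.
Qed.

End CompleteReducibility.

Section RestrictedTrace.
Variables (n : nat) (W : 'M[algC]_n.+1).
Let restr (M : 'M[algC]_n.+1) := row_base W *m M^T *m pinvmx (row_base W).

Let restr_row_base M : (W *m M^T <= W)%MS -> restr M *m row_base W = row_base W *m M^T.
Proof.
move=> WM; rewrite /restr mulmxKpV //.
by rewrite eq_row_base (submx_trans _ WM) // submxMr // eq_row_base.
Qed.

Lemma restr_mulmx M1 M2 :
  (W *m M2^T <= W)%MS -> restr (M1 *m M2) = restr M2 *m restr M1.
Proof.
by move=> WM2; rewrite {1}/restr trmx_mul (mulmxA (row_base W)) -restr_row_base // /restr !mulmxA.
Qed.

(* If P is idempotent and P M P = 0, then tr(PM) = tr(PPM) = tr(PMP) = 0 on W. *)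
Lemma restr_trace_idem_sandwich0 P M : (W *m P^T <= W)%MS -> (W *m M^T <= W)%MS ->
  P *m P = P -> P *m M *m P = 0 -> restr_trace W (P *m M) = 0.
Proof.
move=> WP WM PP PMP; rewrite /restr_trace -/(restr (P *m M)).
have WPM : (W *m (P *m M)^T <= W)%MS.
  by rewrite trmx_mul mulmxA (submx_trans (submxMr _ WM) WP).
have WMP : (W *m (M *m P)^T <= W)%MS.
  by rewrite trmx_mul mulmxA (submx_trans (submxMr _ WP) WM).
have restrP : restr P = restr P *m restr P by rewrite -{1}PP restr_mulmx.
rewrite restr_mulmx // restrP mulmxA mxtrace_mulC mulmxA -!restr_mulmx //.
by rewrite mulmxA PMP /restr trmx0 mulmx0 mul0mx mxtrace0.
Qed.

End RestrictedTrace.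

Lemma sqr_opp1_addinv_eq0 (n : nat) (M : 'M[algC]_n.+1) : M *m M = - 1%:M -> M + invmx M = 0.
Proof.
move=> MM; have MN : M *m (- M) = 1%:M by rewrite mulmxN MM opprK.
have [M_unit _] := mulmx1_unit MN.
by rewrite -[invmx M]mulmx1 -MN mulmxA mulVmx // mul1mx subrr.
Qed.

Lemma expfz_subn (F : fieldType) (q : F) m k : q != 0 -> q ^ (m%:Z - k%:Z) = q ^+ m / q ^+ k.
Proof. by move=> q0; rewrite expfzDr // -exprnN. Qed.

Section ThetaForm.
Variables (n : nat) (e : rel 'I_n.+1) (q : algC).
Hypothesis q_neq0 : q != 0.
Local Notation D := (diam e).

Lemma thetaformE i : thetaform e q i =
  vpar e q * (q ^+ D / q ^+ (2 * i) - q ^+ (2 * i) / q ^+ D).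
Proof. by rewrite /thetaform /vpar !expfz_subn. Qed.

Lemma thetaform_subn r : (r <= D)%N -> thetaform e q (D - r) = - thetaform e q r.
Proof.
move=> rD; rewrite /thetaform.
have -> : D%:Z - (2 * (D - r))%:Z = (2 * r)%:Z - D%:Z by lia.
have -> : (2 * (D - r))%:Z - D%:Z = D%:Z - (2 * r)%:Z by lia.
by rewrite -mulrN opprB.
Qed.

Lemma thetaform_root1 d : q ^+ d * q ^+ d = 1 -> thetaform e q d = thetaform e q 0.
Proof.
move=> qd2; rewrite !thetaformE muln0 expr0 divr1 div1r.
by rewrite mul2n -addnn exprD qd2 divr1 div1r.
Qed.

End ThetaForm.

(* kappa(W) as it unfolds once a(W) = a, b(W) = b and the trace term of phi_1 vanishes. *)
Lemma kappa_identity (F : fieldType) (q a b : F) (d : nat) :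
  q != 0 -> q - q^-1 != 0 -> q ^+ d - q ^- d != 0 -> a ^+ 2 = -1 -> b ^+ 2 = -1 ->
  a / b * q ^ (d%:Z - 1) + b / a * q ^ (1 - d%:Z) +
  ((b * q ^ ((2 * 0)%:Z - d%:Z) + b^-1 * q ^ (d%:Z - (2 * 0)%:Z)) -
   (b * q ^ ((2 * 1)%:Z - d%:Z) + b^-1 * q ^ (d%:Z - (2 * 1)%:Z))) *
  (0 - (a * q ^ ((2 * d)%:Z - d%:Z) + a^-1 * q ^ (d%:Z - (2 * d)%:Z)))
  / ((q - q^-1) * (q ^+ d - q ^- d)) = 0.
Proof.
move=> q0 qq1 qqd a2 b2.
have inv_opp (c : F) : c ^+ 2 = -1 -> c^-1 = - c.
  move=> c2; have c0 : c != 0.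
    by apply: contra_eqN c2 => /eqP->; rewrite expr0n eq_sym oppr_eq0 oner_eq0.
  by apply: (mulfI c0); rewrite mulfV // mulrN -expr2 c2 opprK.
rewrite (inv_opp a a2) (inv_opp b b2) (_ : d%:Z - 1 = d%:Z - 1%:Z) //.
rewrite (_ : 1 - d%:Z = 1%:Z - d%:Z) // !expfz_subn // muln0 muln1 expr0 expr1.
rewrite mul2n -addnn exprD; set t := q ^+ d.
have t0 : t != 0 by rewrite expf_neq0.
have sqr_sub1 (s : F) : s != 0 -> s - s^-1 != 0 -> s * s - 1 != 0.
  move=> s0; have -> : s - s^-1 = (s * s - 1) / s by field.
  by apply: contra => /eqP->; rewrite mul0r.
by field; rewrite t0 q0 !sqr_sub1 // oner_eq0.
Qed.

Section Theorem6p9.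
Variables (n : nat) (e : rel 'I_n.+1) (E : nat -> 'M[algC]_n.+1) (x : 'I_n.+1).
Variables (theta thetas : nat -> algC) (q a b : algC).
Hypothesis e_sym : symmetric e.
Hypothesis conn : connected_graph e.
Hypothesis dist_reg : distance_regular e.
Hypothesis D_ge1 : (1 <= diam e)%N.
Hypothesis bip : bipartite e.
Hypothesis hQ : Qpoly_primitive_idempotents e E.
Hypothesis A_theta : Amx e = \sum_(i < (diam e).+1) theta i *: E i.
Hypothesis Astar_thetas : Astar E x = \sum_(i < (diam e).+1) thetas i *: Estar e x i.
Hypothesis q_neq0 : q != 0.
Hypothesis q4_neq1 : q ^+ 4 != 1.
Hypothesis theta_form : forall i, (i <= diam e)%N ->
  theta i = thetaform e q i /\ thetas i = thetaform e q i.
Hypothesis a2 : a ^+ 2 = upar e q / vpar e q.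
Hypothesis b2 : b ^+ 2 = upar e q / vpar e q.
Hypothesis thin : thin_known_facts e E x.
Local Notation D := (diam e).
Local Notation irreducible := (irreducible e E x).

Lemma thetaform_inj j k : (j <= D)%N -> (k <= D)%N ->
  thetaform e q j = thetaform e q k -> j = k.
Proof.
move=> jD kD; rewrite -(proj2 (theta_form jD)) -(proj2 (theta_form kD)).
exact: (thetas_inj hQ D_ge1 dist_reg Astar_thetas jD kD).
Qed.

Lemma vpar_neq0 : vpar e q != 0.
Proof.
apply/eqP=> v0; have := thetaform_inj (leq0n _) D_ge1.
by rewrite !thetaformE // v0 !mul0r => /(_ erefl).
Qed.

Lemma sqr_opp1 c : c ^+ 2 = upar e q / vpar e q -> c ^+ 2 = -1.
Proof. by rewrite /upar mulNr divff // vpar_neq0. Qed.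

Lemma subr_inv_neq0 : q - q^-1 != 0.
Proof.
apply: contra q4_neq1 => /eqP/subr0_eq qq; apply/eqP.
have q2 : q ^+ 2 = 1 by rewrite expr2 {2}qq mulfV.
by rewrite (_ : 4 = 2 * 2)%N // exprM q2 expr1n.
Qed.

Lemma expr_subr_inv_neq0 d : (0 < d <= D)%N -> q ^+ d - q ^- d != 0.
Proof.
case/andP=> d_gt0 dD; apply: contraTneq d_gt0 => /subr0_eq qd.
rewrite -leqNgt leqn0; apply/eqP/(thetaform_inj dD (leq0n _))/thetaform_root1 => //.
by rewrite {2}qd mulfV // expf_neq0.
Qed.

Lemma E_Amx i : (i <= D)%N -> E i *m Amx e = theta i *: E i.
Proof.
move=> iD; have iD' : (i < D.+1)%N by [].
rewrite A_theta mulmx_sumr (bigD1 (Ordinal iD')) //= big1 ?addr0 => [|j ji].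
  by rewrite -scalemxAr (mulmx_E hQ iD iD) eqxx.
rewrite -scalemxAr (mulmx_E hQ iD (ltn_ord j)) (_ : (i == j) = false) ?scaler0 //.
by apply/negbTE; apply: contra ji => /eqP ij; apply/eqP/val_inj.
Qed.

Section IrreducibleModule.
Variable W : 'M[algC]_n.+1.
Hypothesis W_irr : irreducible W.
Local Notation r := (endpoint e x W).

Lemma W_stable M : Tmem e E x M -> (W *m M^T <= W)%MS.
Proof. by case: W_irr => W_mod _ _; apply: W_mod. Qed.

Lemma endpoint_ltn : (r < D.+1)%N.
Proof.
have /existsP[i Wi] : [exists i : 'I_D.+1, nz_on (Estar e x i) W].
  case: W_irr => _ W0 _; apply: contraR W0 => /existsPn W_none.
  rewrite -[W]mulmx1 -(sum_Estar e x) mulmx_sumr big1 // => i _.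
  by have := W_none i; rewrite /nz_on negbK tr_Estar => /eqP.
exact: leq_ltn_trans (bigmin_ord_le _ Wi) (ltn_ord i).
Qed.

Lemma nz_on_Estar_endpoint : nz_on (Estar e x r) W.
Proof. by rewrite /endpoint; have [i Wi ->] := bigmin_ord_witness endpoint_ltn. Qed.

Lemma nz_on_E_endpoint : nz_on (E r) W.
Proof.
have [_ dual_eq _] := thin W_irr.
have := endpoint_ltn; rewrite -dual_eq => /bigmin_ord_witness[i Wi].
by rewrite /dual_endpoint => ->.
Qed.

Lemma mod_diam0_Estar_fix : mod_diam e x W = 0%N -> W *m Estar e x r = W.
Proof.
move=> d0; pose r' : 'I_D.+1 := Ordinal endpoint_ltn.
have card_le1 : (#|[set i : 'I_D.+1 | nz_on (Estar e x i) W]| <= 1)%N.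
  by move: d0; rewrite /mod_diam; case: #|_| => [|[|]].
have others (i : 'I_D.+1) : i != r' -> W *m Estar e x i = 0.
  move=> ir; apply/eqP; apply: contraTT card_le1 => Wi; rewrite -ltnNge.
  rewrite (cardD1 i) inE /nz_on tr_Estar Wi add1n ltnS; apply/card_gt0P; exists r'.
  by rewrite !inE eq_sym ir; apply: nz_on_Estar_endpoint.
rewrite -[RHS]mulmx1 -(sum_Estar e x) mulmx_sumr (bigD1 r') //= big1 ?addr0 //.
Qed.

Lemma mod_diam0_Amx : mod_diam e x W = 0%N -> W *m Amx e = 0.
Proof.
move=> /mod_diam0_Estar_fix WE.
have /submxP [Y WA] := W_stable (Tmem_Amx e E x); rewrite tr_Amx // in WA.
have WAE : W *m Amx e = W *m Amx e *m Estar e x r by rewrite WA -{1}WE mulmxA.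
by rewrite WAE -{1}WE -!mulmxA (mulmxA (Estar e x r)) Estar_Amx_Estar // mulmx0.
Qed.

Lemma double_endpoint_le_diam : (2 * r <= D)%N.
Proof.
rewrite leqNgt; apply/negP => D_lt.
have [_ _ dW] := thin W_irr.
have rD : (r <= D)%N by rewrite -ltnS endpoint_ltn.
have /mod_diam0_Amx WA : mod_diam e x W = 0%N by rewrite dW; apply/eqP; rewrite subn_eq0 ltnW.
have theta_r0 : theta r = 0.
  apply: contraTeq nz_on_E_endpoint => theta_r; rewrite /nz_on negbK.
  have : theta r *: (W *m (E r)^T) = 0.
    by rewrite scalemxAr -linearZ /= -E_Amx // trmx_mul tr_Amx // mulmxA WA mul0mx.
  by move/eqP; rewrite scaler_eq0 (negbTE theta_r).
have : thetaform e q (D - r) = thetaform e q r.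
  by rewrite thetaform_subn // -(proj1 (theta_form rD)) theta_r0 oppr0.
move/(thetaform_inj (leq_subr _ _) rD) => Dr.
by move: D_lt; rewrite mul2n -addnn -{1}Dr subnK ?ltnn.
Qed.

Lemma aW_eq : aW e E x q a W = a.
Proof.
rewrite /aW; have [_ -> ->] := thin W_irr.
rewrite subnKC; last exact: double_endpoint_le_diam.
by rewrite subrr expr0z mulr1.
Qed.

Lemma bW_eq : bW e x q b W = b.
Proof.
rewrite /bW; have [_ _ ->] := thin W_irr.
rewrite subnKC; last exact: double_endpoint_le_diam.
by rewrite subrr expr0z mulr1.
Qed.

Lemma restr_trace_Estar_bA : restr_trace W (Estar e x r *m bA e q a) = 0.
Proof.
have TbA : Tmem e E x (bA e q a).
  by apply/TmemZ/TmemB; [apply: Tmem_Amx | apply: Tmem_scalar].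
apply: restr_trace_idem_sandwich0; rewrite ?W_stable //.
- exact: Tmem_Estar hQ D_ge1 dist_reg Astar_thetas r.
- by rewrite mul_Estar eqxx.
by rewrite /bA /wpar raddf0 subr0 -scalemxAr -scalemxAl Estar_Amx_Estar // scaler0.
Qed.

Lemma kappa_eq0 : kappa e E x q a b W = 0.
Proof.
rewrite /kappa; case: eqP => // d_neq0.
have d_pos : (0 < mod_diam e x W <= D)%N.
  apply/andP; split; first by rewrite lt0n; apply/eqP.
  by have [_ _ ->] := thin W_irr; apply: leq_subr.
rewrite /phi1 restr_trace_Estar_bA /vths /vth aW_eq bW_eq.
apply: kappa_identity => //; first exact: subr_inv_neq0.
- exact: expr_subr_inv_neq0.
- exact: sqr_opp1.
- exact: sqr_opp1.
Qed.

End IrreducibleModule.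

(* By complete reducibility, M^2 = -1 since this holds on every irreducible module. *)
Lemma scalar_on_types_addinv_eq0 M f : scalar_on_types e E x M f ->
  (forall W, irreducible W -> f W ^+ 2 = -1) -> M + invmx M = 0.
Proof.
move=> Mf f2; apply/sqr_opp1_addinv_eq0/eqP; rewrite -subr_eq0 opprK; apply/eqP.
have T_tr N : Tmem e E x N -> Tmem e E x N^T by apply: Tmem_tr.
have T_conj N : Tmem e E x N -> Tmem e E x (map_mx conjC N).
  by apply/Tmem_conj/(Tmem_conj_Astar hQ D_ge1 dist_reg Astar_thetas).
apply: (irreducibles_annihilated_eq0 T_tr T_conj) => W W_irr.
rewrite linearD /= trmx_mul trmx1 mulmxDr mulmx1 mulmxA (Mf W W_irr) -scalemxAl.
by rewrite (Mf W W_irr) scalerA -expr2 f2 // scaleN1r addNr.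
Qed.

Lemma addinv_abc_eq0 (c : 'M[algC]_n.+1 -> algC) (Ma Mb Mc : 'M[algC]_n.+1) :
  c_choice e E x q a b c ->
  scalar_on_types e E x Ma (aW e E x q a) -> scalar_on_types e E x Mb (bW e x q b) ->
  scalar_on_types e E x Mc c ->
  [/\ Ma + invmx Ma = 0, Mb + invmx Mb = 0 & Mc + invmx Mc = 0].
Proof.
move=> [c_root _] Ma_a Mb_b Mc_c; split; [ apply: (scalar_on_types_addinv_eq0 Ma_a)
  | apply: (scalar_on_types_addinv_eq0 Mb_b) | apply: (scalar_on_types_addinv_eq0 Mc_c)] => W W_irr.
- by rewrite aW_eq //; apply: sqr_opp1.
- by rewrite bW_eq //; apply: sqr_opp1.
have := c_root W W_irr; rewrite kappa_eq0 // mul0r subr0.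
by move/eqP; rewrite addr_eq0 => /eqP.
Qed.

End Theorem6p9.

Theorem theorem6p9 (n : nat) (e : rel 'I_n.+1) (E : nat -> 'M[algC]_n.+1)
    (x : 'I_n.+1) (theta thetas : nat -> algC) (q a b : algC)
    (c : 'M[algC]_n.+1 -> algC) (Ma Mb Mc Lam C : 'M[algC]_n.+1) :
  simple_graph e -> connected_graph e -> distance_regular e ->
  (3 <= diam e)%N -> bipartite e -> two_homogeneous e -> ~ is_hypercube e ->
  Qpoly_primitive_idempotents e E ->
  Amx e = \sum_(i < (diam e).+1) theta i *: E i ->
  Astar E x = \sum_(i < (diam e).+1) thetas i *: Estar e x i ->
  q != 0 -> q ^+ 4 != 1 ->
  (forall i, (i <= diam e)%N ->
     theta i = thetaform e q i /\ thetas i = thetaform e q i) ->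
  a ^+ 2 = upar e q / vpar e q -> b ^+ 2 = upar e q / vpar e q ->
  thin_known_facts e E x ->
  c_choice e E x q a b c ->
  scalar_on_types e E x Ma (aW e E x q a) ->
  scalar_on_types e E x Mb (bW e x q b) ->
  scalar_on_types e E x Mc c ->
  scalar_on_types e E x Lam (fun W => q ^+ (mod_diam e x W).+1) ->
  let bA := bA e q a in
  let bB := bB e E x q b in
  Tmem e E x C ->
  bA + (q ^+ 2 - q ^- 2)^-1 *: (q *: (bB *m C) - q^-1 *: (C *m bB)) =
    (q + q^-1)^-1 *: ((Ma + invmx Ma) *m (Lam + invmx Lam)
                      + (Mb + invmx Mb) *m (Mc + invmx Mc)) ->
  bB + (q ^+ 2 - q ^- 2)^-1 *: (q *: (C *m bA) - q^-1 *: (bA *m C)) =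
    (q + q^-1)^-1 *: ((Mb + invmx Mb) *m (Lam + invmx Lam)
                      + (Mc + invmx Mc) *m (Ma + invmx Ma)) ->
  C + (q ^+ 2 - q ^- 2)^-1 *: (q *: (bA *m bB) - q^-1 *: (bB *m bA)) =
    (q + q^-1)^-1 *: ((Mc + invmx Mc) *m (Lam + invmx Lam)
                      + (Ma + invmx Ma) *m (Mb + invmx Mb)) ->
  [/\ bA + (q ^+ 2 - q ^- 2)^-1 *: (q *: (bB *m C) - q^-1 *: (C *m bB)) = 0,
      bB + (q ^+ 2 - q ^- 2)^-1 *: (q *: (C *m bA) - q^-1 *: (bA *m C)) = 0 &
      C + (q ^+ 2 - q ^- 2)^-1 *: (q *: (bA *m bB) - q^-1 *: (bB *m bA)) = 0].
Proof.
move=> [_ e_sym] conn dist_reg D_ge3 bip _ _ hQ A_theta Astar_thetas q_neq0 q4_neq1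
  theta_form a2 b2 thin c_ch Ma_a Mb_b Mc_c _ bA bB _ eqA eqB eqC.
have D_ge1 : (1 <= diam e)%N by apply: leq_trans D_ge3.
have [Ma0 Mb0 Mc0] := addinv_abc_eq0 e_sym conn dist_reg D_ge1 bip hQ A_theta
  Astar_thetas q_neq0 q4_neq1 theta_form a2 b2 thin c_ch Ma_a Mb_b Mc_c.
by rewrite Ma0 Mb0 Mc0 !mul0mx addr0 scaler0 in eqA eqB eqC.
Qed.
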